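(* Let $p$ be a positive integer and consider the $\delta_{p,2}$-filtration of $A_1(\mathbf{C})$ (weights $\Lambda(i,j)=pi+2j$). Let $L$ be a nonzero operator in $A_1(\mathbf{C})$ whose symbol is $\sigma(L)=(\xi^p+\chi^2)^2$. If $M\neq0$ lies in the centralizer of $L$ in $A_1(\mathbf{C})$, then $\mathrm{ord}(M)\equiv 0$ or $\mathrm{ord}(M)\equiv p \pmod{2p}$.
   Context: $A_1(\mathbf{C})$ is the first Weyl algebra of operators $P=\sum a_{ij}x^i\partial^j$, $[\partial,x]=1$; $\mathrm{ord}(P)$ is the degree in $\partial$. With $\Lambda(i,j)=pi+2j$, $\delta(P)=\max\{\Lambda(i,j):a_{ij}\neq0\}$ and the symbol is $\sigma(P)=\sum_{\Lambda(i,j)=\delta(P)}a_{ij}\chi^i\xi^j\in\mathbf{C}[\chi,\xi]$. *)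

From HB Require Import structures.
From mathcomp Require Import all_boot all_order all_algebra.
Set Implicit Arguments. Unset Strict Implicit. Unset Printing Implicit Defensive.
Import Order.TTheory GRing.Theory Num.Theory.
Local Open Scope ring_scope.

(* An operator
   P = \sum_{i,j} a_ij x^i d^j  is represented in normal form as
   P : {poly {poly R}}, where the outer variable stands for the derivation d
   and P`_j : {poly R} is the polynomial coefficient of d^j (in the variable x);
   thus a_ij = (P`_j)`_i.  Addition is that of {poly {poly R}}; multiplication
   is given by the Leibniz rule  d^j g = \sum_l C(j,l) g^{(l)} d^(j-l),
   which encodes the relation [d, x] = 1. *)

Definition weyl_mul (R : fieldType) (P Q : {poly {poly R}}) : {poly {poly R}} :=
  \sum_(j < size P) \sum_(k < size Q) \sum_(l < j.+1)
     (((P`_j * (Q`_k)^`(l)) *+ 'C(j, l))%:P * 'X^(j + k - l)).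

Definition weyl_ord (R : fieldType) (P : {poly {poly R}}) : nat := (size P).-1.

Definition weyl_coef (R : fieldType) (P : {poly {poly R}}) (i j : nat) : R :=
  (P`_j)`_i.

Definition Lambda (p i j : nat) : nat := (p * i + 2 * j)%N.

Definition weyl_delta (R : fieldType) (p : nat) (P : {poly {poly R}}) : nat :=
  (\max_(j < size P) \max_(i < size (P`_j)%R | weyl_coef P i j != 0%R) Lambda p i j)%N.

(* sigma(P) = \sum_{Lambda(i,j) = delta(P)} a_ij chi^i xi^j in R[chi, xi],
   represented in {poly {poly R}} with outer variable xi and inner variable chi. *)
Definition weyl_symbol (R : fieldType) (p : nat) (P : {poly {poly R}})
  : {poly {poly R}} :=
  \poly_(j < size P) \poly_(i < size P`_j)
     (if Lambda p i j == weyl_delta p P then weyl_coef P i j else 0).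

From HB Require Import structures.
From mathcomp Require Import all_boot all_order all_algebra.
From mathcomp Require Import zify ring.
Import Order.TTheory GRing.Theory Num.Theory.
Local Open Scope ring_scope.

(* Operators of A_1(C) are stored in normal form as P : {poly {poly C}}, the
   outer variable being xi (for the derivation d) and the inner one chi (for x);
   the same type also holds commutative polynomials of C[chi, xi].

   Proof.  (1) The product of A_1 is given by the Moyal-type formula
   P Q = \sum_l (d_xi^l P / l!) (d_chi^l Q), the products on the right being
   commutative.  (2) All terms of weight Lambda > delta(L) + delta(M) vanish;
   after multiplication by chi xi, the top-weight part of [L, M] = 0 reads
   E_xi sigma(L) E_chi sigma(M) - E_xi sigma(M) E_chi sigma(L) = 0, where
   E_xi = xi d_xi and E_chi = chi d_chi are the Euler operators (the terms
   l >= 2 lose weight, the term l = 0 cancels).  (3) With sigma(L) = f^2,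
   f = xi^p + chi^2, and g = sigma(M), dividing by 2f leaves the identity
   p xi^p E_chi g = 2 chi^2 E_xi g, i.e. the recurrence on coefficients
   p i g_(j-p, i) = 2 j g_(j, i-2).  (4) Walking this recurrence from a nonzero
   coefficient of g first reaches a nonzero g_(J, 0), which forces
   ord(M) = J (since g is homogeneous of weight delta(M) = 2J), and then walks
   along the diagonal g_(J - t p, 2t); if p did not divide J this would produce
   a nonzero g_(J mod p, 2t) contradicting the recurrence.  Hence p | J, i.e.
   J = 0 or p mod 2p. *)

Set Implicit Arguments. Unset Strict Implicit. Unset Printing Implicit Defensive.

Lemma poly2P (C : nzRingType) (P Q : {poly {poly C}}) :
  (forall i j, P`_j`_i = Q`_j`_i) -> P = Q.
Proof. by move=> H; apply/polyP => j; apply/polyP => i. Qed.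

Lemma poly2_neq0 (C : nzRingType) (P : {poly {poly C}}) :
  P != 0 -> exists i j, P`_j`_i != 0.
Proof.
move=> nzP; have [j nzj] : exists j, P`_j != 0.
  by exists (size P).-1; rewrite -lead_coefE lead_coef_eq0.
by exists (size P`_j).-1, j; rewrite -lead_coefE lead_coef_eq0.
Qed.

Lemma sum_neq0 (V : zmodType) n (F : 'I_n -> V) :
  \sum_(i < n) F i != 0 -> exists i, F i != 0.
Proof.
move=> nz; case: (pickP (fun i => F i != 0)) => [i h|h]; first by exists i.
by move: nz; rewrite big1 ?eqxx // => i _; apply/eqP; move: (h i) => /negbFE.
Qed.

Lemma mulrn_neq0 (R : numDomainType) (x : R) n : x != 0 -> (0 < n)%N -> x *+ n != 0.
Proof. by move=> x0 n0; rewrite mulrn_eq0 negb_or x0 -lt0n n0. Qed.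

Lemma poly2_mulrn_eq0 (C : numDomainType) (P : {poly {poly C}}) n :
  P *+ n = 0 -> (0 < n)%N -> P = 0.
Proof.
move=> Pn n0; apply: poly2P => i j.
have /eqP := congr1 (fun X : {poly {poly C}} => X`_j`_i) Pn.
by rewrite /= !coefMn !coef0 mulrn_eq0 eqn0Ngt n0 => /eqP.
Qed.

Lemma Lambda_split p i j m k : (m <= i)%N -> (k <= j)%N ->
  (Lambda p m k + Lambda p (i - m) (j - k) = Lambda p i j)%N.
Proof.
move=> hm hk; have e : (p * m + p * (i - m) = p * i)%N by rewrite -mulnDr subnKC.
rewrite /Lambda; lia.
Qed.

Section WeightedComponents.

Variables (C : fieldType) (p : nat).
Implicit Types (P Q : {poly {poly C}}) (w : nat).

Definition wcomp w P : {poly {poly C}} :=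
  \poly_(j < size P) \poly_(i < size P`_j)
     (if Lambda p i j == w then P`_j`_i else 0).

Definition wle w P := forall i j, P`_j`_i != 0 -> (Lambda p i j <= w)%N.

Lemma coef_wcomp w P i j :
  (wcomp w P)`_j`_i = if Lambda p i j == w then P`_j`_i else 0.
Proof.
rewrite /wcomp coef_poly; case: ltnP => Hj; last first.
  by rewrite [P`_j]nth_default // coef0 if_same.
rewrite coef_poly; case: ltnP => Hi //.
by rewrite [P`_j`_i]nth_default // if_same.
Qed.

Lemma symbol_wcomp P : weyl_symbol p P = wcomp (weyl_delta p P) P.
Proof. by []. Qed.

Lemma wcomp0 w : wcomp w 0 = 0.
Proof. by apply: poly2P => i j; rewrite coef_wcomp !coef0 if_same. Qed.

Lemma wcompD w P Q : wcomp w (P + Q) = wcomp w P + wcomp w Q.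
Proof.
by apply: poly2P => i j; rewrite !coefD !coef_wcomp !coefD; case: ifP; rewrite ?addr0.
Qed.

Lemma wcompB w P Q : wcomp w (P - Q) = wcomp w P - wcomp w Q.
Proof.
by apply: poly2P => i j; rewrite !coefB !coef_wcomp !coefB; case: ifP; rewrite ?subr0.
Qed.

Lemma wcomp_sum w n (F : 'I_n -> {poly {poly C}}) :
  wcomp w (\sum_(l < n) F l) = \sum_(l < n) wcomp w (F l).
Proof. by elim/big_rec2: _ => [|l x y _ <-]; rewrite ?wcomp0 ?wcompD. Qed.

Lemma wcomp_gt w w' P : wle w P -> (w < w')%N -> wcomp w' P = 0.
Proof.
move=> H ww'; apply: poly2P => i j; rewrite coef_wcomp !coef0.
case: eqP => // E; case: (eqVneq (P`_j`_i) 0) => // /H; lia.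
Qed.

Lemma wle_delta P : wle (weyl_delta p P) P.
Proof.
move=> i j nz.
have Hj : (j < size P)%N.
  by rewrite ltnNge; apply: contra nz => h; rewrite (nth_default _ h) coef0.
have Hi : (i < size (P`_j)%R)%N.
  by rewrite ltnNge; apply: contra nz => h; rewrite (nth_default _ h).
apply: leq_trans (leq_bigmax (Ordinal Hj)).
exact: leq_trans _ (leq_bigmax_cond (Ordinal Hi) _).
Qed.

Lemma symbol_neq0 P : P != 0 -> weyl_symbol p P != 0.
Proof.
move=> nzP; apply: contra nzP => /eqP E.
have below : forall i j, P`_j`_i != 0 -> (Lambda p i j < weyl_delta p P)%N.
  move=> i j nz; rewrite ltn_neqAle wle_delta // andbT.
  apply: contra nz => /eqP e.
  by have := congr1 (fun X : {poly {poly C}} => X`_j`_i) E; rewrite /= coef_wcomp e eqxx !coef0 => ->.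
case D: (weyl_delta p P) => [|d] in below *.
  apply/eqP/poly2P => i j; rewrite !coef0.
  by case: (eqVneq (P`_j`_i) 0) => // /below.
have : (weyl_delta p P <= d)%N.
  apply/bigmax_leqP => j _; apply/bigmax_leqP => i nz.
  by have := below _ _ nz; rewrite ltnS.
by rewrite D ltnn.
Qed.

Lemma coef2M P Q i j :
  (P * Q)`_j`_i = \sum_(k < j.+1) \sum_(m < i.+1) P`_k`_m * Q`_(j - k)`_(i - m).
Proof. by rewrite coefM coef_sum; apply: eq_bigr => k _; rewrite coefM. Qed.

Lemma wle_mul a b P Q : wle a P -> wle b Q -> wle (a + b)%N (P * Q).
Proof.
move=> HP HQ i j; rewrite coef2M => /sum_neq0[k /sum_neq0[m]].
rewrite mulf_eq0 negb_or => /andP[/HP h1 /HQ h2].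
rewrite -(Lambda_split p (ltnSE (ltn_ord m)) (ltnSE (ltn_ord k))); lia.
Qed.

Lemma wcompM a b P Q :
  wle a P -> wle b Q -> wcomp (a + b)%N (P * Q) = wcomp a P * wcomp b Q.
Proof.
move=> HP HQ; apply: poly2P => i j.
rewrite coef_wcomp !coef2M.
have -> : (if Lambda p i j == (a + b)%N
   then \sum_(k < j.+1) \sum_(m < i.+1) P`_k`_m * Q`_(j - k)`_(i - m) else 0) =
   \sum_(k < j.+1) \sum_(m < i.+1)
     (if Lambda p i j == (a + b)%N then P`_k`_m * Q`_(j - k)`_(i - m) else 0).
  by case: ifP => _ //; rewrite big1 // => k _; rewrite big1.
apply: eq_bigr => k _; apply: eq_bigr => m _; rewrite !coef_wcomp.
have S := Lambda_split p (ltnSE (ltn_ord m)) (ltnSE (ltn_ord k)).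
have [->|nP] := eqVneq (P`_k`_m) 0; first by rewrite !mul0r !if_same mul0r.
have [->|nQ] := eqVneq (Q`_(j - k)`_(i - m)) 0; first by rewrite !mulr0 !if_same mulr0.
have h1 := HP _ _ nP; have h2 := HQ _ _ nQ.
by case: eqP => e1; case: eqP => e2; case: eqP => e3 //; rewrite ?mul0r ?mulr0 //; lia.
Qed.

End WeightedComponents.

Section MoyalFormula.

Variable C : fieldType.
Implicit Types (P Q : {poly {poly C}}) (l : nat).

Definition deriv_chi l P : {poly {poly C}} := map_poly (derivn l) P.

Definition euler_xi P : {poly {poly C}} := 'X * P^`().
Definition euler_chi P : {poly {poly C}} := ('X)%:P * deriv_chi 1 P.

Lemma coef_deriv_chi l P j : (deriv_chi l P)`_j = (P`_j)^`(l).
Proof. by rewrite /deriv_chi coef_map. Qed.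

Lemma coef2_deriv_chi l P i j :
  (deriv_chi l P)`_j`_i = P`_j`_(l + i) *+ (l + i) ^_ l.
Proof. by rewrite coef_deriv_chi coef_derivn. Qed.

Lemma deriv_chi0 P : deriv_chi 0 P = P.
Proof. by apply/polyP => j; rewrite coef_deriv_chi derivn0. Qed.

Lemma deriv_chi1M P Q : deriv_chi 1 (P * Q) = deriv_chi 1 P * Q + P * deriv_chi 1 Q.
Proof.
apply/polyP => j; rewrite coefD coef_deriv_chi !coefM derivn1 -big_split /=.
rewrite (big_morph _ (@derivD _) (deriv0 _)).
by apply: eq_bigr => k _; rewrite !coef_deriv_chi !derivn1 derivM.
Qed.

Lemma coef_euler_xi P i j : (euler_xi P)`_j`_i = P`_j`_i *+ j.
Proof.
rewrite /euler_xi coefXM; case: j => [|j] /=; first by rewrite coef0 mulr0n.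
by rewrite coef_deriv coefMn.
Qed.

Lemma coef_euler_chi P i j : (euler_chi P)`_j`_i = P`_j`_i *+ i.
Proof.
rewrite /euler_chi coefCM coefXM; case: i => [|i] /=; first by rewrite mulr0n.
by rewrite coef2_deriv_chi add1n ffactn1.
Qed.

Lemma euler_xi_sqr (h : {poly {poly C}}) : euler_xi (h ^+ 2) = (h * euler_xi h) *+ 2.
Proof. by rewrite /euler_xi expr2 derivM (mulrC h^`()) -mulr2n mulrnAr mulrCA. Qed.

Lemma euler_chi_sqr (h : {poly {poly C}}) : euler_chi (h ^+ 2) = (h * euler_chi h) *+ 2.
Proof.
by rewrite /euler_chi expr2 deriv_chi1M (mulrC (deriv_chi 1 h)) -mulr2n mulrnAr mulrCA.
Qed.

Lemma nderivn_expand l P :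
  P^`N(l) = \sum_(j < size P) (P`_j *+ 'C(j, l)) *: 'X^(j - l).
Proof.
rewrite {1}(_ : P = \sum_(j < size P) P`_j *: 'X^j); last by rewrite -poly_def coefK.
elim/big_rec2: _ => [|j x y _ <-]; first by rewrite nderivn_poly0 // size_poly0.
by rewrite nderivnD nderivnZ nderivnXn -scalerMnr scalerMnl.
Qed.

Lemma deriv_chi_expand l Q :
  deriv_chi l Q = \sum_(k < size Q) (Q`_k)^`(l) *: 'X^k.
Proof. by rewrite -(poly_def (size Q) (fun k => (Q`_k)^`(l))); apply/polyP. Qed.

Lemma moyal P Q N : (size P <= N)%N ->
  weyl_mul P Q = \sum_(l < N) P^`N(l) * deriv_chi l Q.
Proof.
move=> hN.
pose G j k l := ((P`_j * (Q`_k)^`(l)) *+ 'C(j, l)) *: ('X^(j + k - l) : {poly {poly C}}).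
have -> : weyl_mul P Q = \sum_(j < size P) \sum_(k < size Q) \sum_(l < N) G j k l.
  apply: eq_bigr => j _; apply: eq_bigr => k _.
  rewrite (eq_bigr (fun l : 'I_j.+1 => G j k l)); last by move=> l _; rewrite mul_polyC.
  rewrite (big_ord_widen _ (fun l => G j k l) (leq_trans (ltn_ord j) hN)).
  rewrite big_mkcond /=; apply: eq_bigr => l _; case: ifP => hl //.
  by rewrite /G bin_small ?mulr0n ?scale0r //; lia.
rewrite (eq_bigr (fun j : 'I_(size P) => \sum_(l < N) \sum_(k < size Q) G j k l));
  last by move=> j _; rewrite exchange_big.
rewrite exchange_big /=; apply: eq_bigr => l _.
rewrite nderivn_expand deriv_chi_expand big_distrl /=.
apply: eq_bigr => j _; rewrite big_distrr /=; apply: eq_bigr => k _.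
rewrite -scalerAl -scalerAr scalerA -exprD mulrnAl /G.
case: (leqP l j) => hl; first by congr (_ *: 'X^_); lia.
by rewrite bin_small // !mulr0n !scale0r.
Qed.

End MoyalFormula.

Section TopWeightBracket.

Variables (C : fieldType) (p : nat).
Implicit Types (P Q : {poly {poly C}}) (a b w l : nat).

Local Notation xi := ('X : {poly {poly C}}).
Local Notation chi := (('X)%:P : {poly {poly C}}).

(* The Euler operators scale each monomial, hence commute with taking
   weighted components and preserve weight bounds. *)
Lemma wcomp_euler_xi w P : wcomp p w (euler_xi P) = euler_xi (wcomp p w P).
Proof.
apply: poly2P => i j; rewrite coef_wcomp !coef_euler_xi coef_wcomp.
by case: ifP; rewrite ?mul0rn.
Qed.

Lemma wcomp_euler_chi w P : wcomp p w (euler_chi P) = euler_chi (wcomp p w P).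
Proof.
apply: poly2P => i j; rewrite coef_wcomp !coef_euler_chi coef_wcomp.
by case: ifP; rewrite ?mul0rn.
Qed.

Lemma wle_euler_xi w P : wle p w P -> wle p w (euler_xi P).
Proof.
move=> H i j; rewrite coef_euler_xi => nz; apply: H.
by apply: contraNneq nz => ->; rewrite mul0rn.
Qed.

Lemma wle_euler_chi w P : wle p w P -> wle p w (euler_chi P).
Proof.
move=> H i j; rewrite coef_euler_chi => nz; apply: H.
by apply: contraNneq nz => ->; rewrite mul0rn.
Qed.

Lemma wle_nderivn w l P :
  wle p w P -> forall i j, (P^`N(l))`_j`_i != 0 -> (Lambda p i j + 2 * l <= w)%N.
Proof.
move=> H i j; rewrite coef_nderivn coefMn => nz.
have nz' : P`_(l + j)`_i != 0 by apply: contraNneq nz => ->; rewrite mul0rn.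
by have := H _ _ nz'; rewrite /Lambda; lia.
Qed.

Lemma wle_deriv_chi w l P :
  wle p w P -> forall i j, (deriv_chi l P)`_j`_i != 0 -> (Lambda p i j + p * l <= w)%N.
Proof.
move=> H i j; rewrite coef2_deriv_chi => nz.
have nz' : P`_j`_(l + i) != 0 by apply: contraNneq nz => ->; rewrite mul0rn.
by have := H _ _ nz'; rewrite /Lambda mulnDr; lia.
Qed.

Lemma poly2_eq0_weight w P (c : nat) :
  (forall i j, P`_j`_i != 0 -> (Lambda p i j + c <= w)%N) -> (w < c)%N -> P = 0.
Proof.
move=> H wc; apply: poly2P => i j; rewrite !coef0.
by apply/eqP/negPn/negP => /H; lia.
Qed.

(* After multiplication by chi xi, the Moyal terms with l >= 2 have weight
   < a + b: each loses (l - 1)(p + 2) > 0. *)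
Lemma moyal_term_low a b l P Q :
  (0 < p)%N -> (2 <= l)%N -> wle p a P -> wle p b Q ->
  wcomp p (a + b)%N (chi * xi * (P^`N(l) * deriv_chi l Q)) = 0.
Proof.
move=> p0 l2 HP HQ.
rewrite (mulrC chi) mulrACA.
have [ha|ha] := leqP (2 * l) a; last first.
  by rewrite (poly2_eq0_weight (wle_nderivn (l:=l) HP) ha) mulr0 mul0r wcomp0.
have [hb|hb] := leqP (p * l) b; last first.
  by rewrite (poly2_eq0_weight (wle_deriv_chi (l:=l) HQ) hb) !mulr0 wcomp0.
have hpl : (p * 2 <= p * l)%N by rewrite leq_mul2l l2 orbT.
apply: (@wcomp_gt _ _ (a - 2 * l + 2 + (b - p * l + p))); last by lia.
apply: wle_mul => i j.
  rewrite coefXM; case: j => [|j] /=; first by rewrite coef0 eqxx.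
  by move=> /(wle_nderivn (l:=l) HP); rewrite /Lambda; lia.
rewrite coefCM coefXM; case: i => [|i] /=; first by rewrite eqxx.
by move=> /(wle_deriv_chi (l:=l) HQ); rewrite /Lambda; lia.
Qed.

Lemma moyal_term_one a b P Q :
  wle p a P -> wle p b Q ->
  wcomp p (a + b)%N (chi * xi * (P^`N(1) * deriv_chi 1 Q)) =
  euler_xi (wcomp p a P) * euler_chi (wcomp p b Q).
Proof.
move=> HP HQ; rewrite nderivn1 (mulrC chi) mulrACA.
by rewrite (wcompM (wle_euler_xi HP) (wle_euler_chi HQ)) wcomp_euler_xi wcomp_euler_chi.
Qed.

Lemma commuting_symbols (L M : {poly {poly C}}) :
  (0 < p)%N -> L != 0 -> M != 0 -> weyl_mul L M = weyl_mul M L ->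
  euler_xi (weyl_symbol p L) * euler_chi (weyl_symbol p M)
  - euler_xi (weyl_symbol p M) * euler_chi (weyl_symbol p L) = 0.
Proof.
move=> p0 nL nM LM.
have HL := @wle_delta _ p L; have HM := @wle_delta _ p M.
set a := weyl_delta p L in HL *; set b := weyl_delta p M in HM *.
pose N := (size L + size M)%N.
have N2 : (1 < N)%N by rewrite /N; move: nL nM; rewrite -!size_poly_gt0; lia.
have brk : \sum_(l < N) (L^`N(l) * deriv_chi l M - M^`N(l) * deriv_chi l L) = 0.
  by rewrite sumrB -!moyal ?LM ?subrr ?leq_addl ?leq_addr.
have := congr1 (fun X => wcomp p (a + b)%N (chi * xi * X)) brk.
rewrite /= mulr0 wcomp0 mulr_sumr wcomp_sum -(subnKC N2) 2!big_ord_recl big1.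
  rewrite /= !nderivn0 !deriv_chi0 (mulrC M L) subrr mulr0 wcomp0 add0r addr0.
  by rewrite mulrBr wcompB moyal_term_one // /bump /= (addnC a) moyal_term_one.
move=> l _; rewrite mulrBr wcompB moyal_term_low //.
by rewrite (addnC a) moyal_term_low ?subrr.
Qed.

End TopWeightBracket.

Section SquareSymbol.

Variables (C : numFieldType) (p : nat).
Hypothesis p_gt0 : (0 < p)%N.

Local Notation f := ('X^p + ('X^2)%:P : {poly {poly C}}).

Definition euler_balanced (g : {poly {poly C}}) : Prop :=
  ('X^p * euler_chi g) *+ p = (('X^2)%:P * euler_xi g) *+ 2.

(* f is Lambda-homogeneous: E_xi f = p xi^p and E_chi f = 2 chi^2. *)
Lemma euler_xi_f : euler_xi f = 'X^p *+ p.
Proof.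
by rewrite /euler_xi derivD derivC addr0 derivXn mulrnAr -exprS prednK.
Qed.

Lemma euler_chi_f : euler_chi f = ('X^2 *+ 2)%:P.
Proof.
rewrite /euler_chi; have -> : deriv_chi 1 f = ('X *+ 2)%:P.
  apply/polyP => j; rewrite coef_deriv_chi derivn1 coefD coefXn !coefC.
  by case: (j == p); case: (j == 0%N); rewrite ?derivD ?derivC ?derivXn ?addr0 ?add0r.
by rewrite -polyCM mulrnAr -expr2.
Qed.

(* f is nonzero: its coefficient at xi^p chi^0 is 1. *)
Lemma f_neq0 : f != 0.
Proof.
apply/eqP => f0; have := congr1 (fun X : {poly {poly C}} => X`_p`_0) f0.
rewrite /= coefD coefXn eqxx coefC (negbTE (lt0n_neq0 p_gt0)) addr0 !coef0.
by rewrite coefC /= => /eqP; rewrite oner_eq0.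
Qed.

(* For sigma(L) = f^2, the Euler bracket identity, divided by 2 f,
   says that sigma(M) is balanced. *)
Lemma square_symbol_balanced (L M : {poly {poly C}}) :
  L != 0 -> weyl_symbol p L = f ^+ 2 ->
  M != 0 -> weyl_mul L M = weyl_mul M L ->
  euler_balanced (weyl_symbol p M).
Proof.
move=> nL sL nM LM; have := commuting_symbols p_gt0 nL nM LM.
rewrite sL euler_xi_sqr euler_chi_sqr euler_xi_f euler_chi_f.
set g := weyl_symbol p M.
pose Y := ('X^p * euler_chi g) *+ p - (('X^2)%:P * euler_xi g) *+ 2.
have -> : f * ('X^p *+ p) *+ 2 * euler_chi g - euler_xi g * (f * ('X^2 *+ 2)%:P *+ 2)
          = (f * Y) *+ 2.
  by rewrite /Y rmorphMn /=; ring.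
move=> /poly2_mulrn_eq0 /(_ isT) /eqP; rewrite mulf_eq0 (negbTE f_neq0) subr_eq0.
by move=> /eqP.
Qed.

End SquareSymbol.

Section BalancedCoefficients.

Variables (C : numFieldType) (p : nat) (g : {poly {poly C}}).
Hypotheses (p_gt0 : (0 < p)%N) (g_bal : euler_balanced p g).

Lemma balanced_shift i j :
  g`_j`_i *+ (i * p) = if (i < 2)%N then 0 else g`_(j + p)`_(i - 2) *+ (2 * (j + p)).
Proof.
have := congr1 (fun X : {poly {poly C}} => X`_(j + p)`_i) g_bal.
rewrite /= !coefMn (coefXnM p (euler_chi g)) ltnNge leq_addl addnK coef_euler_chi.
rewrite coefCM (coefXnM 2) -mulrnA => ->.
by case: ltnP; rewrite ?mul0rn // coef_euler_xi -mulrnA mulnC.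
Qed.

Lemma balanced_low i j : (j < p)%N -> g`_j`_i *+ (2 * j) = 0.
Proof.
move=> jp; have := congr1 (fun X : {poly {poly C}} => X`_j`_(i + 2)) g_bal.
rewrite /= !coefMn coefXnM jp coef0 mul0rn coefCM coefXnM ltnNge leq_addl /= addnK.
by rewrite coef_euler_xi -mulrnA mulnC.
Qed.

(* Walking down in chi from any nonzero coefficient reaches the xi-axis. *)
Lemma balanced_axis : g != 0 -> exists J, g`_J`_0 != 0.
Proof.
case/poly2_neq0 => i [j]; elim/ltn_ind: i j => -[|[|i]] IH j nz; first by exists j.
  by have := balanced_shift 1 j; rewrite /= mul1n => /eqP; rewrite (negbTE (mulrn_neq0 nz p_gt0)).
apply: (IH i _ (j + p)%N); first by [].
have ip : (0 < i.+2 * p)%N by rewrite muln_gt0 p_gt0.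
have := mulrn_neq0 nz ip; rewrite balanced_shift subn2 /= => nz'.
by apply: contraNneq nz' => ->; rewrite mul0rn.
Qed.

Lemma balanced_diagonal J t : g`_J`_0 != 0 -> (t * p <= J)%N ->
  g`_(J - t * p)`_(2 * t) != 0.
Proof.
move=> gJ; elim: t => [|t IH] ht; first by rewrite mul0n subn0.
have ht' : (t * p <= J)%N by move: ht; rewrite mulSn; lia.
have shift : (J - t.+1 * p + p = J - t * p)%N by move: ht; rewrite mulSn; lia.
have pos : (0 < 2 * (J - t * p))%N by move: ht; rewrite mulSn; lia.
have e2 : (2 * t.+1 - 2 = 2 * t)%N by lia.
have l2 : (2 * t.+1 < 2)%N = false by lia.
have := balanced_shift (2 * t.+1) (J - t.+1 * p); rewrite l2 e2 shift => e.
have := mulrn_neq0 (IH ht') pos; rewrite -e.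
by apply: contraNneq => ->; rewrite mul0rn.
Qed.

(* Hence p divides J: otherwise the diagonal ends below xi^p at J mod p. *)
Lemma balanced_dvd J : g`_J`_0 != 0 -> (p %| J)%N.
Proof.
move=> gJ; have := balanced_diagonal (t := (J %/ p)%N) gJ (leq_divM J p).
have -> : (J - J %/ p * p = J %% p)%N by have := divn_eq J p; lia.
move=> gr; apply: contraTT gr; rewrite /dvdn negbK => /negPf r0.
have /eqP := balanced_low (2 * (J %/ p))%N (ltn_pmod J p_gt0).
by rewrite mulrn_eq0 muln_eq0 r0.
Qed.

End BalancedCoefficients.

(* If the symbol of M has a nonzero coefficient at xi^J, then ord(M) = J:
   that coefficient has weight 2J = delta(M), which bounds 2 j for every
   nonzero coefficient at xi^j of M. *)
Lemma ord_of_axis_symbol (C : fieldType) p (M : {poly {poly C}}) J :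
  (weyl_symbol p M)`_J`_0 != 0 -> weyl_ord M = J.
Proof.
rewrite symbol_wcomp coef_wcomp; case: ifP => [/eqP eJ MJ|_]; last by rewrite eqxx.
suff sM : size M = J.+1 by rewrite /weyl_ord sM.
apply/eqP; rewrite eqn_leq; apply/andP; split.
  apply/leq_sizeP => j hj; apply/polyP => i; rewrite coef0.
  apply/eqP/negPn/negP => nz; have := @wle_delta _ p M _ _ nz.
  by rewrite -eJ /Lambda; lia.
by rewrite ltnNge; apply: contra MJ => h; rewrite (nth_default _ h) coef0.
Qed.

Lemma dvdn_mod_double (p J : nat) :
  (p %| J)%N -> J = 0 %[mod 2 * p] \/ J = p %[mod 2 * p].
Proof.
case/dvdnP => t ->; rewrite (divn_eq t 2) modn2 mulnDl -mulnA modnMDl.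
by case: (odd t); [right; rewrite mul1n | left; rewrite mul0n].
Qed.

(* In weyl_symbol, outer 'X = xi, inner 'X = chi:  sigma(L) = (xi^p + chi^2)^2. *)
Theorem mainTheorem6 (C : numClosedFieldType) (p : nat) (L M : {poly {poly C}}) :
  (0 < p)%N ->
  L != 0 ->
  weyl_symbol p L = ('X^p + ('X^2)%:P) ^+ 2 ->
  M != 0 ->
  weyl_mul L M = weyl_mul M L ->
  weyl_ord M = 0 %[mod 2 * p] \/ weyl_ord M = p %[mod 2 * p].
Proof.
move=> p_gt0 nzL sL nzM LM.
have bal := square_symbol_balanced p_gt0 nzL sL nzM LM.
have [J gJ] := balanced_axis p_gt0 bal (symbol_neq0 p nzM).
rewrite (ord_of_axis_symbol gJ).
exact: dvdn_mod_double (balanced_dvd p_gt0 bal gJ).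
Qed.
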